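(* Let $E\subseteq\mathbb{R}$ and let $f:E\to\mathbb{R}$ be Abel continuous on $E$. Then $f$ is statistically continuous on $E$.
   Context: A sequence $(p_n)$ of real numbers is Abel convergent to $\ell$ if $\sum_{k=0}^{\infty}p_k x^k$ converges for every $0\le x<1$ and $\lim_{x\to 1^-}(1-x)\sum_{k=0}^{\infty}p_k x^k=\ell$. $f$ is Abel continuous on $E$ if for every sequence $(p_n)$ in $E$ Abel convergent to some $\ell\in E$, $(f(p_n))$ is Abel convergent to $f(\ell)$. A sequence $(p_k)$ is statistically convergent to $\ell$ if for every $\varepsilon>0$, $\lim_{n\to\infty}\frac1n|\{k\le n:|p_k-\ell|\ge\varepsilon\}|=0$. $f$ is statistically continuous on $E$ if for every sequence $(p_n)$ in $E$ statistically convergent to some $\ell\in E$, the sequence $(f(p_n))$ is statistically convergent to $f(\ell)$. *)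

From Stdlib Require Import Reals.
From Coquelicot Require Import Coquelicot.
Open Scope R_scope.

Definition abel_convergent (p : nat -> R) (l : R) : Prop :=
  (forall x : R, 0 <= x < 1 -> ex_series (fun k => p k * x ^ k)) /\
  filterlim (fun x => (1 - x) * Series (fun k => p k * x ^ k))
            (at_left 1) (locally l).

Definition bad_count (p : nat -> R) (l eps : R) (n : nat) : R :=
  sum_n (fun k => if Rle_dec eps (Rabs (p k - l)) then 1 else 0) n.

Definition stat_convergent (p : nat -> R) (l : R) : Prop :=
  forall eps : R, 0 < eps ->
    is_lim_seq (fun n => bad_count p l eps n / INR n) 0.

Definition abel_continuous (E : R -> Prop) (f : R -> R) : Prop :=
  forall (p : nat -> R) (l : R), (forall n, E (p n)) -> E l ->
    abel_convergent p l -> abel_convergent (fun n => f (p n)) (f l).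

Definition stat_continuous (E : R -> Prop) (f : R -> R) : Prop :=
  forall (p : nat -> R) (l : R), (forall n, E (p n)) -> E l ->
    stat_convergent p l -> stat_convergent (fun n => f (p n)) (f l).

(* An Abel continuous function is continuous on E (relative to E): if f jumped
   by eps along a sequence x_n -> l fast enough that sum |x_n - l| < oo, then
   (x_n) would be Abel convergent to l while (f x_n) stays on one side of
   f l +- eps, and Abel limits preserve such bounds.  Continuity in turn maps
   statistically convergent sequences to statistically convergent ones, since
   |f(p_k) - f(l)| >= eps forces |p_k - l| >= delta. *)
From Stdlib Require Import Reals Lra Lia ClassicalEpsilon.
From Coquelicot Require Import Coquelicot.
Open Scope R_scope.

Lemma Rabs_mul_pow_le (a y : R) (k : nat) :
  Rabs y <= 1 -> Rabs (a * y ^ k) <= Rabs a.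
Proof.
  intros Hy.
  rewrite Rabs_mult, <- RPow_abs.
  assert (Hk : Rabs y ^ k <= 1).
  { rewrite <- (pow1 k); apply pow_incr; split; [apply Rabs_pos | exact Hy]. }
  assert (0 <= Rabs y ^ k) by (apply pow_le, Rabs_pos).
  assert (0 <= Rabs a) by apply Rabs_pos.
  nra.
Qed.

Section DominatedPowerSeries.

Variables (a : nat -> R) (y : R).
Hypotheses (Hy : Rabs y <= 1) (Ha : ex_series (fun k => Rabs (a k))).

Lemma ex_series_Rabs_mul_pow : ex_series (fun k => Rabs (a k * y ^ k)).
Proof.
  apply (ex_series_le (K := R_AbsRing) (V := R_CompleteNormedModule))
    with (fun k => Rabs (a k)); [|exact Ha].
  intro k; change (norm (Rabs (a k * y ^ k))) with (Rabs (Rabs (a k * y ^ k))).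
  rewrite Rabs_Rabsolu; exact (Rabs_mul_pow_le _ _ _ Hy).
Qed.

Lemma ex_series_mul_pow : ex_series (fun k => a k * y ^ k).
Proof. exact (ex_series_Rabs _ ex_series_Rabs_mul_pow). Qed.

Lemma Rabs_Series_mul_pow_le :
  Rabs (Series (fun k => a k * y ^ k)) <= Series (fun k => Rabs (a k)).
Proof.
  eapply Rle_trans; [exact (Series_Rabs _ ex_series_Rabs_mul_pow)|].
  apply Series_le; [|exact Ha].
  intro k; split; [apply Rabs_pos | exact (Rabs_mul_pow_le _ _ _ Hy)].
Qed.

End DominatedPowerSeries.

Lemma ex_series_scal_geom (c y : R) : Rabs y < 1 -> ex_series (fun k => c * y ^ k).
Proof. intros Hy; exact (ex_series_scal_l c _ (ex_series_geom y Hy)). Qed.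

Lemma Series_scal_geom (c y : R) :
  Rabs y < 1 -> Series (fun k => c * y ^ k) = c / (1 - y).
Proof.
  intros Hy; rewrite Series_scal_l.
  change (Series (pow y)) with (Series (fun k => y ^ k)).
  now rewrite (is_series_unique _ _ (is_series_geom y Hy)).
Qed.

Lemma Series_zero : Series (fun _ : nat => 0) = 0.
Proof.
  transitivity (0 * Series (fun _ : nat => 0)); [|ring].
  rewrite <- Series_scal_l; apply Series_ext; intro; ring.
Qed.

Lemma Series_le_ex (u v : nat -> R) :
  ex_series u -> ex_series v -> (forall n, u n <= v n) -> Series u <= Series v.
Proof.
  intros Hu Hv Huv.
  assert (H0 : Series (fun _ => 0) <= Series (fun n => v n - u n)).
  { apply Series_le; [intro n; specialize (Huv n); lra|].
    exact (ex_series_minus (K := R_AbsRing) (V := R_NormedModule) _ _ Hv Hu). }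
  rewrite Series_minus, Series_zero in H0 by assumption; lra.
Qed.

Section SummableDeviation.

Variables (x : nat -> R) (l : R).
Hypothesis Hdev : ex_series (fun n => Rabs (x n - l)).

Lemma ex_series_summable_dev_mul_pow (y : R) :
  Rabs y < 1 -> ex_series (fun k => x k * y ^ k).
Proof.
  intros Hy.
  apply ex_series_ext with (fun k => plus (l * y ^ k) ((x k - l) * y ^ k)).
  - intro k; unfold plus; simpl; ring.
  - apply (ex_series_plus (K := R_AbsRing) (V := R_NormedModule)).
    + exact (ex_series_scal_geom l y Hy).
    + apply ex_series_mul_pow; [lra | exact Hdev].
Qed.

Lemma Rabs_abel_mean_sub_le (y : R) : Rabs y < 1 ->
  Rabs ((1 - y) * Series (fun k => x k * y ^ k) - l)
    <= Rabs (1 - y) * Series (fun n => Rabs (x n - l)).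
Proof.
  intros Hy.
  assert (Hyl : 1 - y <> 0) by (apply Rabs_def2 in Hy; lra).
  replace (Series (fun k => x k * y ^ k))
    with (Series (fun k => l * y ^ k) + Series (fun k => (x k - l) * y ^ k)).
  2:{ rewrite <- Series_plus.
      - apply Series_ext; intro; ring.
      - exact (ex_series_scal_geom l y Hy).
      - apply ex_series_mul_pow; [lra | exact Hdev]. }
  rewrite Series_scal_geom by exact Hy.
  replace ((1 - y) * (l / (1 - y) + Series (fun k => (x k - l) * y ^ k)) - l)
    with ((1 - y) * Series (fun k => (x k - l) * y ^ k)) by (field; exact Hyl).
  rewrite Rabs_mult; apply Rmult_le_compat_l; [apply Rabs_pos|].
  apply Rabs_Series_mul_pow_le; [lra | exact Hdev].
Qed.

Lemma abel_convergent_summable : abel_convergent x l.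
Proof.
  set (G := Series (fun n => Rabs (x n - l))).
  assert (HG : 0 <= G).
  { unfold G; rewrite <- Series_zero.
    apply Series_le; [intro; split; [lra | apply Rabs_pos] | exact Hdev]. }
  split.
  { intros y Hy; apply ex_series_summable_dev_mul_pow; rewrite Rabs_pos_eq; lra. }
  apply filterlim_locally; intros eps.
  assert (Hdelta : 0 < Rmin 1 (eps / (G + 1))).
  { apply Rmin_pos; [lra | apply Rdiv_lt_0_compat; [apply cond_pos | lra]]. }
  exists (mkposreal _ Hdelta); intros y Hy Hy1.
  change (Rabs (y - 1) < Rmin 1 (eps / (G + 1))) in Hy.
  change (Rabs ((1 - y) * Series (fun k => x k * y ^ k) - l) < eps).
  assert (Hm1 := Rmin_l 1 (eps / (G + 1))).
  assert (Hm2 := Rmin_r 1 (eps / (G + 1))).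
  apply Rabs_def2 in Hy.
  eapply Rle_lt_trans; [apply Rabs_abel_mean_sub_le; rewrite Rabs_pos_eq; lra|].
  fold G; rewrite Rabs_pos_eq by lra.
  assert (Hlt : (1 - y) * (G + 1) < eps).
  { replace (pos eps) with (eps / (G + 1) * (G + 1)) by (field; lra).
    apply Rmult_lt_compat_r; lra. }
  nra.
Qed.

End SummableDeviation.

Lemma abel_convergent_const (c : R) : abel_convergent (fun _ => c) c.
Proof.
  apply abel_convergent_summable.
  apply ex_series_ext with (fun k => 0 * 0 ^ k).
  - intro k; change (0 * 0 ^ k = Rabs (c - c)); rewrite Rminus_diag, Rabs_R0; ring.
  - apply ex_series_scal_geom; rewrite Rabs_R0; lra.
Qed.

Lemma abel_limit_le (p q : nat -> R) (a b : R) :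
  abel_convergent p a -> abel_convergent q b -> (forall k, p k <= q k) -> a <= b.
Proof.
  intros [Hp Hpl] [Hq Hql] Hpq.
  refine (filterlim_le (F := at_left 1)
    (fun y => (1 - y) * Series (fun k => p k * y ^ k))
    (fun y => (1 - y) * Series (fun k => q k * y ^ k)) a b _ Hpl Hql).
  exists (mkposreal 1 Rlt_0_1); intros y Hy Hy1.
  change (Rabs (y - 1) < 1) in Hy; apply Rabs_def2 in Hy.
  apply Rmult_le_compat_l; [lra|].
  apply Series_le_ex; [apply Hp; lra | apply Hq; lra|].
  intro k; apply Rmult_le_compat_r; [apply pow_le; lra | apply Hpq].
Qed.

Lemma abel_convergent_opp (p : nat -> R) (l : R) :
  abel_convergent p l -> abel_convergent (fun n => - p n) (- l).
Proof.
  intros [Hex Hlim]; split.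
  - intros y Hy.
    apply ex_series_ext with (fun k => opp (p k * y ^ k)).
    + intro k; unfold opp; simpl; ring.
    + exact (ex_series_opp (K := R_AbsRing) (V := R_NormedModule) _ (Hex y Hy)).
  - apply (filterlim_ext (fun y => opp ((1 - y) * Series (fun k => p k * y ^ k)))).
    + intro y; change (- ((1 - y) * Series (fun k => p k * y ^ k))
        = (1 - y) * Series (fun k => - p k * y ^ k)).
      rewrite Ropp_mult_distr_r, <- Series_opp.
      f_equal; apply Series_ext; intro; ring.
    + eapply filterlim_comp; [exact Hlim | exact (filterlim_opp (V := R_NormedModule) l)].
Qed.

Lemma abel_continuous_opp (E : R -> Prop) (f : R -> R) :
  abel_continuous E f -> abel_continuous E (fun x => - f x).
Proof. intros Hf p l Hp El Hpl; exact (abel_convergent_opp _ _ (Hf p l Hp El Hpl)). Qed.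

(* Points x_n violating the bound with |x_n - l| < 2^-n give an Abel convergent
   sequence whose image has an Abel limit >= f l + eps. *)
Lemma abel_continuous_upper (E : R -> Prop) (f : R -> R) (l eps : R) :
  abel_continuous E f -> E l -> 0 < eps ->
  exists d, 0 < d /\ forall x, E x -> Rabs (x - l) < d -> f x < f l + eps.
Proof.
  intros Hf El Heps.
  apply NNPP; intros Hnot.
  assert (Hbad : forall n : nat,
    exists x, E x /\ Rabs (x - l) < (/2) ^ n /\ f l + eps <= f x).
  { intro n; apply NNPP; intros Hn; apply Hnot.
    exists ((/2) ^ n); split; [apply pow_lt; lra|].
    intros x Ex Hx; apply Rnot_le_lt; intros Hle; apply Hn; exists x; auto. }
  destruct (choice _ Hbad) as [xs Hxs].
  assert (Hconv : abel_convergent xs l).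
  { apply abel_convergent_summable.
    apply (ex_series_le (K := R_AbsRing) (V := R_CompleteNormedModule))
      with (fun n => (/2) ^ n).
    - intro n; change (Rabs (Rabs (xs n - l)) <= (/2) ^ n).
      rewrite Rabs_Rabsolu; left; apply Hxs.
    - apply ex_series_geom; rewrite Rabs_pos_eq; lra. }
  assert (Hle := abel_limit_le _ _ _ _ (abel_convergent_const (f l + eps))
    (Hf xs l (fun n => proj1 (Hxs n)) El Hconv) (fun n => proj2 (proj2 (Hxs n)))).
  lra.
Qed.

Lemma abel_continuous_near (E : R -> Prop) (f : R -> R) (l eps : R) :
  abel_continuous E f -> E l -> 0 < eps ->
  exists d, 0 < d /\ forall x, E x -> Rabs (x - l) < d -> Rabs (f x - f l) < eps.
Proof.
  intros Hf El Heps.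
  destruct (abel_continuous_upper E f l eps Hf El Heps) as [d1 [Hd1 Hup]].
  destruct (abel_continuous_upper E (fun x => - f x) l eps
    (abel_continuous_opp E f Hf) El Heps) as [d2 [Hd2 Hlow]].
  exists (Rmin d1 d2); split; [apply Rmin_pos; lra|].
  intros x Ex Hx.
  assert (Hx1 := Hup x Ex (Rlt_le_trans _ _ _ Hx (Rmin_l d1 d2))).
  assert (Hx2 := Hlow x Ex (Rlt_le_trans _ _ _ Hx (Rmin_r d1 d2))).
  apply Rabs_def1; lra.
Qed.

Lemma bad_count_ge0 (p : nat -> R) (l eps : R) (n : nat) :
  0 <= bad_count p l eps n.
Proof.
  unfold bad_count; rewrite sum_n_Reals.
  apply cond_pos_sum; intro k; destruct (Rle_dec _ _); lra.
Qed.

Lemma bad_count_le (p q : nat -> R) (l m d eps : R) (n : nat) :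
  (forall k, eps <= Rabs (q k - m) -> d <= Rabs (p k - l)) ->
  bad_count q m eps n <= bad_count p l d n.
Proof.
  intros Hqp; unfold bad_count; rewrite !sum_n_Reals.
  apply sum_Rle; intros k _.
  destruct (Rle_dec eps _) as [Hq|]; destruct (Rle_dec d _) as [Hp|Hp]; try lra.
  exfalso; exact (Hp (Hqp k Hq)).
Qed.

Lemma stat_convergent_comp (E : R -> Prop) (f : R -> R) (p : nat -> R) (l : R) :
  (forall eps, 0 < eps -> exists d, 0 < d /\
     forall x, E x -> Rabs (x - l) < d -> Rabs (f x - f l) < eps) ->
  (forall n, E (p n)) -> stat_convergent p l ->
  stat_convergent (fun n => f (p n)) (f l).
Proof.
  intros Hcont Hp Hs eps Heps.
  destruct (Hcont eps Heps) as [d [Hd Hnear]].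
  apply is_lim_seq_le_le
    with (u := fun _ => 0) (w := fun n => bad_count p l d n / INR n);
    [| apply is_lim_seq_const | exact (Hs d Hd)].
  intro n.
  assert (Hinv : 0 <= / INR n).
  { destruct n as [|n]; [simpl; rewrite Rinv_0; lra|].
    left; apply Rinv_0_lt_compat, lt_0_INR; lia. }
  split; [apply Rmult_le_pos; [apply bad_count_ge0 | exact Hinv]|].
  apply Rmult_le_compat_r; [exact Hinv|].
  apply bad_count_le; intros k Hk.
  apply Rnot_lt_le; intros Hpk; specialize (Hnear _ (Hp k) Hpk); lra.
Qed.

Theorem corollary2 (E : R -> Prop) (f : R -> R) :
  abel_continuous E f -> stat_continuous E f.
Proof.
  intros Hf p l Hp El.
  apply stat_convergent_comp with E; [|exact Hp].
  intros eps Heps; exact (abel_continuous_near E f l eps Hf El Heps).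
Qed.
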